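(* Let $(G,H,T)$ be a loop folder such that $T$ is invariant under conjugation by $H$. Suppose $t\in T$ is such that $Ht$ is also a left coset of $H$, i.e. there is $g\in G$ with $Ht=gH$ (this holds in particular if $t$ normalizes $H$). Then $[t,H]=1$.
   Context: A loop folder is a triple $(G,H,T)$ with $G$ a finite group, $H\le G$, and $T\subseteq G$ with $1\in T$ such that $T$ is a set of representatives for the right cosets $H^g\backslash G$ for every $g\in G$. *)

From mathcomp Require Import all_boot all_fingroup.
Set Implicit Arguments. Unset Strict Implicit. Unset Printing Implicit Defensive.
Local Open Scope group_scope.

Definition loop_folder (gT : finGroupType) (G H : {group gT}) (T : {set gT}) :=
  [/\ H \subset G, T \subset G, 1 \in T &
      forall g, g \in G -> is_transversal T (rcosets (H :^ g) G) G].

From mathcomp Require Import all_boot all_fingroup.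
Set Implicit Arguments. Unset Strict Implicit. Unset Printing Implicit Defensive.
Local Open Scope group_scope.

(* Since Ht = gH contains t, it equals tH, so t normalizes H. Hence for h in H
   the conjugate t^h = h^-1 t h lies in h^-1 H t h = Ht; it also lies in T, which
   is h-invariant. As T is a transversal of the right cosets of H (take g = 1 in
   the definition of a loop folder), t^h = t, i.e. [t, h] = 1. *)

Section CosetFacts.

Variables (gT : finGroupType) (H : {group gT}).

Lemma rlcoset_norm t g : H :* t = g *: H -> t \in 'N(H).
Proof.
move=> eHt; have /lcoset_eqP egH : t \in g *: H by rewrite -eHt rcoset_refl.
by apply/normP; rewrite conjsgE eHt -egH -lcosetM mulVg lcoset1.
Qed.

Lemma norm_conjg_rcoset t h : t \in 'N(H) -> h \in H -> t ^ h \in H :* t.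
Proof.
move=> nHt Hh; rewrite mem_rcoset conjgE -!mulgA groupM ?groupV //.
by rewrite -{1}(invgK t) -conjgE memJ_norm ?groupV.
Qed.

Lemma transversal_rcoset_inj (G : {group gT}) (X : {set gT}) :
  is_transversal X (rcosets H G) G ->
  {in X &, forall x y, y \in H :* x -> y = x}.
Proof.
move=> trX x y Xx Xy Hxy; apply: (pblock_inj trX) => //.
have tiP : trivIset (rcosets H G) by case/andP: trX => /and3P[].
have sXG := subsetP (transversal_sub trX).
have HxG : H :* x \in rcosets H G by apply/rcosetsP; exists x; rewrite ?sXG.
by rewrite !(def_pblock tiP HxG) ?rcoset_refl.
Qed.

End CosetFacts.

Theorem lemma3p2 (gT : finGroupType) (G H : {group gT}) (T : {set gT})
  (t : gT) :
  loop_folder G H T ->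
  (forall h, h \in H -> T :^ h = T) ->
  t \in T ->
  (exists2 g, g \in G & H :* t = g *: H) ->
  [~: [set t], H] = 1.
Proof.
move=> [_ _ _ trT] TJ Tt [g _ eHt].
have trT1 : is_transversal T (rcosets H G) G.
  by rewrite -[H in rcosets H]conjsg1 trT.
apply/commG1P/centsP => _ /set1P-> h Hh.
apply/commgP/conjg_fixP; apply: (transversal_rcoset_inj trT1) => //.
  by rewrite -(TJ h Hh) memJ_conjg.
exact/norm_conjg_rcoset/Hh/rlcoset_norm/eHt.
Qed.
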